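(* For every real $\varepsilon>0$ there exist a positive integer $j$ and a vector $\mathbf{y}\in\mathbb{R}^j$ with $\mathbf{y}\ge \mathbf{0}$ (componentwise) such that $M_{j,\varepsilon}^T\mathbf{y}\ge \mathbf{0}$ and $\mathbf{b}'^T_{j,\varepsilon}\mathbf{y}<0$.
   Context: For a positive integer $j$ and real $\varepsilon$, $M_{j,\varepsilon}$ is the $j\times j$ lower triangular matrix with entries $m_{a,b}=1$ if $a=b$, $m_{a,b}=-(3-\varepsilon)$ if $a=b+1$, $m_{a,b}=1$ if $a\ge b+2$, and $m_{a,b}=0$ if $a<b$. The vector $\mathbf{b}'_{j,\varepsilon}\in\mathbb{R}^j$ has coordinates $b'_1=7-2\varepsilon$ and $b'_i=12-i-3\varepsilon$ for $2\le i\le j$ (equivalently, $\mathbf{b}'_{j,\varepsilon}=(8-2\varepsilon)\mathbf{1}-M_{j,\varepsilon}\mathbf{1}$, where $\mathbf{1}$ is the all-ones vector). *)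

From mathcomp Require Import all_boot all_order all_algebra.
From mathcomp Require Import reals.
Set Implicit Arguments. Unset Strict Implicit. Unset Printing Implicit Defensive.
Import Order.TTheory GRing.Theory Num.Theory.
Local Open Scope ring_scope.

(* Indices are 0-based ordinals 'I_j; the paper's 1-based index a corresponds to i+1. *)
Definition Mmat (R : realType) (j : nat) (eps : R) : 'M[R]_j :=
  \matrix_(a < j, b < j)
    (if (a == b :> nat) then 1
     else if (a == b.+1 :> nat) then - (3 - eps)
     else if (b.+2 <= a)%N then 1
     else 0).

Definition bvec (R : realType) (j : nat) (eps : R) : 'cV[R]_j :=
  \col_(a < j)
    (if (a == 0 :> nat) then 7 - 2 * eps
     else 12 - (a.+1)%:R - 3 * eps).

From mathcomp Require Import all_boot all_order all_algebra.
From mathcomp Require Import reals.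
From mathcomp Require Import zify ring lra.
From Stdlib Require Import Classical.
Set Implicit Arguments. Unset Strict Implicit. Unset Printing Implicit Defensive.
Import Order.TTheory GRing.Theory Num.Theory.
Local Open Scope ring_scope.

(* Put c = 3 - eps and let u be the sequence with u_0 = 1, u_1 = c and
   u_(k+2) = (1 + c) (u_(k+1) - u_k), equivalently u_(k+1) = c u_k - sum_(i<k) u_i.
   As c < 3 the sequence cannot stay nonnegative: otherwise its ratios
   r_k = u_(k+1) / u_k would satisfy r_(k+1) = (1 + c) (1 - 1 / r_k) <= r_k - g
   for a fixed g > 0.  Cut u just before its first negative term u_n, reverse it
   and pad it with 11 zeros: the entries of M^T y are then the residuals of the
   recurrence, namely u_0 = 1, zeros, -u_n > 0 and partial sums of u.  The zeros
   hide the positive entries of b', and b'^T y < 0 because the remaining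
   entries of b' are negative. *)

Section Sequence.
Variables (R : comPzRingType) (c : R).

Fixpoint useq_pair (k : nat) : R * R :=
  if k is k'.+1 then let p := useq_pair k' in (p.2, (1 + c) * (p.2 - p.1))
  else (1, c).

Definition useq (k : nat) : R := (useq_pair k).1.

Lemma useq0 : useq 0 = 1. Proof. by []. Qed.
Lemma useq1 : useq 1 = c. Proof. by []. Qed.
Lemma useqSS k : useq k.+2 = (1 + c) * (useq k.+1 - useq k). Proof. by []. Qed.

Lemma useqS_sum k : useq k.+1 = c * useq k - \sum_(i < k) useq i.
Proof.
elim: k => [|k IH]; first by rewrite big_ord0 useq1 useq0; ring.
by rewrite useqSS big_ord_recr /= IH; ring.
Qed.

Definition useq_trunc (n k : nat) : R := if (k < n)%N then useq k else 0.

End Sequence.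

(* With r = b / a <= t the ratio of two consecutive terms, the next ratio is at
   most t minus the gap (1 + c) (3 - c) / (4 c); the proof completes the square
   in a (1 + c) (b - a). *)
Lemma ratio_step (R : realFieldType) (c a b t : R) :
  0 < c <= 3 -> 0 < a -> a <= b -> b <= t * a -> t <= c ->
  (1 + c) * (b - a) <= (t - (1 + c) * (3 - c) / (4 * c)) * b.
Proof.
move=> /andP[c_gt0 c_le3] a_gt0 le_ab le_bta le_tc.
rewrite -(ler_pM2l a_gt0).
have square : a * ((1 + c) * (b - a))
    = b * b - (b - (1 + c) * a / 2) ^+ 2 - (1 + c) * (3 - c) / 4 * a * a.
  by field.
have gap : (1 + c) * (3 - c) / (4 * c) * b <= (1 + c) * (3 - c) / 4 * a.
  set d := (1 + c) * (3 - c) / 4.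
  have d_ge0 : 0 <= d by apply: divr_ge0; nra.
  have -> : (1 + c) * (3 - c) / (4 * c) = d / c by rewrite /d; field; lra.
  have le_bca : b <= c * a by apply: (le_trans le_bta); rewrite ler_pM2r.
  rewrite -mulrA; apply: ler_wpM2l => //.
  by rewrite mulrC ler_pdivrMr // mulrC.
have := sqr_ge0 (b - (1 + c) * a / 2).
rewrite square; nra.
Qed.

Section NonnegativeSequence.
Variables (R : archiRealFieldType) (c : R).
Hypotheses (c_gt0 : 0 < c) (c_lt3 : c < 3) (useq_ge0 : forall k, 0 <= useq c k).

Let gap := (1 + c) * (3 - c) / (4 * c).

Let c_add1_gt0 : 0 < 1 + c. Proof. by rewrite addr_gt0. Qed.

Let gap_gt0 : 0 < gap.
Proof. by rewrite divr_gt0 ?mulr_gt0 ?subr_gt0. Qed.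

Lemma useq_nondecr k : useq c k <= useq c k.+1.
Proof.
by have := useq_ge0 k.+2; rewrite useqSS pmulr_rge0 // subr_ge0.
Qed.

Lemma useq_ge1 k : 1 <= useq c k.
Proof. by elim: k => [|k IH]; [rewrite useq0 | exact: le_trans IH (useq_nondecr k)]. Qed.

Lemma useq_ratio_le k : useq c k.+1 <= (c - k%:R * gap) * useq c k.
Proof.
elim: k => [|k IH]; first by rewrite useq1 useq0 mul0r subr0 mulr1.
have k_gap_ge0 : 0 <= k%:R * gap := mulr_ge0 (ler0n _ k) (ltW gap_gt0).
rewrite useqSS mulrSr [_ * gap]mulrDl mul1r opprD addrA.
apply: ratio_step; rewrite ?c_gt0 ?(ltW c_lt3) ?useq_nondecr //; last lra.
by apply: lt_le_trans (useq_ge1 k).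
Qed.

Lemma useq_nonneg_absurd : False.
Proof.
have /archi_boundP : 0 <= c / gap by rewrite divr_ge0 ?ltW.
set K := Num.Def.archi_bound _; rewrite ltr_pdivrMr // => lt_c_Kgap.
have := le_trans (useq_ge1 K.+1) (useq_ratio_le K).
have := useq_ge1 K; nra.
Qed.

End NonnegativeSequence.

Lemma useq_eventually_neg (R : archiRealFieldType) (c : R) :
  c < 3 -> exists n, useq c n < 0.
Proof.
move=> c_lt3; have [c_lt0|c_ge0] := ltP c 0; first by exists 1%N; rewrite useq1.
have [c_gt0|c_le0] := ltP 0 c; last first.
  by exists 2%N; rewrite useqSS useq1 useq0 (@le_anti _ _ c 0) ?c_le0 //; lra.
case: (classic (exists n, useq c n < 0)) => // no_neg.
exfalso; apply: (useq_nonneg_absurd c_gt0 c_lt3) => k.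
by rewrite leNgt; apply/negP => neg; apply: no_neg; exists k.
Qed.

Section Residual.
Variables (R : comPzRingType) (c : R).

Definition Mcoef (a b : nat) : R :=
  if a == b then 1 else if a == b.+1 then - c else if (b.+2 <= a)%N then 1 else 0.

Definition resid (v : nat -> R) (p : nat) : R :=
  if p is q.+1 then v q.+1 - c * v q + \sum_(k < q) v k else v 0.

Lemma Mcoef_rev N k p : (k <= N)%N -> (p <= N)%N -> Mcoef (N - k) (N - p) = Mcoef p k.
Proof.
move=> le_kN le_pN; rewrite /Mcoef.
have -> : (N - k == N - p)%N = (p == k) by apply/eqP/eqP; lia.
have -> : (N - k == (N - p).+1)%N = (p == k.+1) by apply/eqP/eqP; lia.
by have -> : ((N - p).+2 <= N - k)%N = (k.+2 <= p)%N by apply/idP/idP; lia.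
Qed.

Lemma sum_Mcoef (v : nat -> R) p N : (p < N)%N ->
  \sum_(k < N) Mcoef p k * v k = resid v p.
Proof.
move=> lt_pN; rewrite -(big_mkord xpredT (fun k => Mcoef p k * v k)).
rewrite (big_cat_nat _ (n := p.+1)) //=.
rewrite [X in _ + X]big1_seq ?addr0; last first.
  move=> k /andP[_]; rewrite mem_index_iota => /andP[lt_pk _].
  rewrite /Mcoef ifN; last by apply/eqP; lia.
  by rewrite ifN ?ifN ?mul0r //; [lia | apply/eqP; lia].
rewrite big_nat_recr //= {2}/Mcoef eqxx mul1r.
case: p lt_pN => [|q] lt_pN; first by rewrite big_geq // add0r.
rewrite big_nat_recr //= {2}/Mcoef ifN; last by apply/eqP; lia.
rewrite eqxx (@eq_big_nat _ _ _ 0 q _ v); last first.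
  move=> k /andP[_ lt_kq]; rewrite /Mcoef ifN; last by apply/eqP; lia.
  rewrite ifN; last by apply/eqP; lia.
  by rewrite ifT ?mul1r //; lia.
by rewrite big_mkord /resid; ring.
Qed.

End Residual.

Lemma useq_trunc_ge0 (R : realDomainType) (c : R) n :
  (forall k, (k < n)%N -> 0 <= useq c k) -> forall k, 0 <= useq_trunc c n k.
Proof. by move=> useq_ge0 k; rewrite /useq_trunc; case: ifP => // /useq_ge0. Qed.

Lemma resid_useq_trunc_ge0 (R : realDomainType) (c : R) n :
  (forall k, (k < n)%N -> 0 <= useq c k) -> useq c n < 0 ->
  forall p, 0 <= resid c (useq_trunc c n) p.
Proof.
move=> useq_ge0 useq_n_lt0 [|q] /=; first exact: useq_trunc_ge0.
have sum_ge0 : 0 <= \sum_(k < q) useq_trunc c n k.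
  by apply: sumr_ge0 => k _; exact: useq_trunc_ge0.
have [lt_qn|le_nq] := ltnP q n; last first.
  by rewrite /useq_trunc !ifN -?leqNgt ?(leq_trans le_nq) // mulr0 subr0 add0r.
have sum_eq : \sum_(k < q) useq_trunc c n k = \sum_(k < q) useq c k.
  by apply: eq_bigr => k _; rewrite /useq_trunc ifT // (ltn_trans (ltn_ord k)).
have -> : useq_trunc c n q = useq c q by rewrite /useq_trunc lt_qn.
rewrite sum_eq /useq_trunc; case: ltnP => [_|le_nSq]; first by rewrite useqS_sum; lra.
have eq_Sqn : q.+1 = n by lia.
by move: useq_n_lt0; rewrite -eq_Sqn useqS_sum; lra.
Qed.

Lemma Mmat_tr_mul_rev (R : realType) (eps : R) N (v : nat -> R) (i : 'I_N.+1) :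
  ((Mmat N.+1 eps)^T *m \col_(a < N.+1) v (N - a)%N) i 0 = resid (3 - eps) v (N - i).
Proof.
rewrite mxE (eq_bigr (fun k : 'I_N.+1 => Mcoef (3 - eps) k i * v (N - k)%N)); last first.
  by move=> k _; rewrite !mxE.
rewrite -(big_mkord xpredT (fun k => Mcoef (3 - eps) k i * v (N - k)%N)) big_nat_rev /=.
rewrite (@eq_big_nat _ _ _ 0 N.+1 _ (fun k => Mcoef (3 - eps) (N - i) k * v k)); last first.
  move=> k /andP[_ lt_kN]; have le_kN : (k <= N)%N by rewrite -ltnS.
  by rewrite add0n subSS subKn // -{1}(subKn (leq_ord i)) Mcoef_rev ?leq_subr.
by rewrite big_mkord sum_Mcoef // ltnS leq_subr.
Qed.

Lemma bvec_tr_mul_lt0 (R : realType) (eps : R) j (y : 'cV[R]_j) (i : 'I_j) :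
  0 < eps -> (forall a, 0 <= y a 0) -> (forall a : 'I_j, (a < 11)%N -> y a 0 = 0) ->
  0 < y i 0 -> ((bvec j eps)^T *m y) 0 0 < 0.
Proof.
move=> eps_gt0 y_ge0 y_head0 y_i_gt0.
have bvec_lt0 (a : 'I_j) : (11 <= a)%N -> bvec j eps a 0 < 0.
  move=> le_11a; rewrite mxE ifN; last by apply/eqP; lia.
  have : 11%:R <= a%:R :> R by rewrite ler_nat.
  rewrite -[a.+1]addn1 natrD; lra.
have le_11i : (11 <= i)%N.
  by rewrite leqNgt; apply/negP => /y_head0 y_i0; move: y_i_gt0; rewrite y_i0 ltxx.
rewrite mxE (bigD1 i) //= [(bvec j eps)^T 0 i]mxE.
have : bvec j eps i 0 * y i 0 < 0 by rewrite nmulr_rlt0 ?bvec_lt0.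
suff : \sum_(a < j | a != i) (bvec j eps)^T 0 a * y a 0 <= 0 by lra.
apply: sumr_le0 => a _; rewrite mxE.
have [lt_a11|le_11a] := ltnP a 11; first by rewrite y_head0 // mulr0.
by rewrite nmulr_rle0 ?bvec_lt0.
Qed.

Theorem mainTheorem6 (R : realType) (eps : R) (heps : 0 < eps) :
  exists (j : nat) (y : 'cV[R]_j),
    (0 < j)%N /\
    (forall i, 0 <= y i 0) /\
    (forall i, 0 <= ((Mmat j eps)^T *m y) i 0) /\
    ((bvec j eps)^T *m y) 0 0 < 0.
Proof.
have [n0 useq_n0_lt0] := @useq_eventually_neg R (3 - eps) ltac:(lra).
have [n useq_n_lt0 n_min] :=
  ex_minnP (ex_intro (fun n => useq (3 - eps) n < 0) _ useq_n0_lt0).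
have useq_ge0 k : (k < n)%N -> 0 <= useq (3 - eps) k.
  by move=> lt_kn; rewrite leNgt; apply/negP => /n_min; rewrite leqNgt lt_kn.
have n_gt0 : (0 < n)%N.
  by rewrite lt0n; apply: contraTneq useq_n_lt0 => ->; rewrite useq0 ltr10.
pose y := \col_(a < (n + 10).+1) useq_trunc (3 - eps) n (n + 10 - a).
have y_ge0 a : 0 <= y a 0 by rewrite mxE useq_trunc_ge0.
exists (n + 10).+1, y; split=> //; split=> //; split.
  by move=> i; rewrite Mmat_tr_mul_rev resid_useq_trunc_ge0.
apply: (@bvec_tr_mul_lt0 _ _ _ _ ord_max) => // [a lt_a11|].
  by rewrite mxE /useq_trunc ifN //; lia.
by rewrite mxE subnn /useq_trunc n_gt0 useq0 ltr01.
Qed.
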